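(* Let $G$ be a simple graph of order $n$ with adjacency eigenvalues $\lambda_1,\lambda_2,\dots,\lambda_n$ (listed with multiplicity), and let $G^l$ be the graph obtained from $G$ by adding a loop on each vertex of $G$. Let $p$ and $q$ be non-negative integers with $m=p+q\ge 1$, and let $(pG\cup qG^l)_{qn}$ denote the disjoint union of $p$ copies of $G$ and $q$ copies of $G^l$, a graph of order $mn$ with exactly $qn$ self-loops. If $|\lambda_i|\ge \max\left(\frac{p}{m},\frac{q}{m}\right)$ for each $i=1,2,\dots,n$, then $E\big((pG\cup qG^l)_{qn}\big)=mE(G)$.
   Context: For a simple graph $G$ with adjacency matrix $A(G)$ and eigenvalues $\lambda_1,\dots,\lambda_n$, the energy is $E(G)=\sum_{i=1}^n|\lambda_i|$. For a graph $G_\sigma$ of order $N$ obtained from a simple graph by attaching self-loops on $\sigma$ of its vertices, the adjacency matrix is $A(G_\sigma)=A(G)+I_\sigma$, where $I_\sigma$ is the $N\times N$ diagonal matrix with exactly $\sigma$ ones on the diagonal (at the looped vertices) and zeros elsewhere; if $\mu_1,\dots,\mu_N$ are the eigenvalues of $A(G_\sigma)$, its energy is $E(G_\sigma)=\sum_{i=1}^N\left|\mu_i-\frac{\sigma}{N}\right|$. The subscript in $(pG\cup qG^l)_{qn}$ indicates the number of loops $\sigma=qn$. *)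

From HB Require Import structures.
From mathcomp Require Import all_boot all_order all_algebra.
From mathcomp Require Import reals.

Set Implicit Arguments. Unset Strict Implicit. Unset Printing Implicit Defensive.
Import Order.TTheory GRing.Theory Num.Theory.
Local Open Scope ring_scope.

Definition simple_graph (V : finType) (e : rel V) : Prop :=
  symmetric e /\ irreflexive e.

(* Adjacency matrix A(G) + I_sigma of the graph (V, e) with self-loops on the
   vertex set L; vertices are indexed through enum_val. *)
Definition adjmx (R : realType) (V : finType) (e : rel V) (L : {set V})
  : 'M[R]_#|V| :=
  \matrix_(i, j) ((e (enum_val i) (enum_val j))%:R
                  + ((i == j) && (enum_val i \in L))%:R).

Definition is_spectrum (R : realType) (N : nat) (M : 'M[R]_N) (s : seq R) : Prop :=
  char_poly M = \prod_(x <- s) ('X - x%:P).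

(* Energy of a graph of order N with sigma loops, given its spectrum s:
   sum_i |mu_i - sigma/N|.  For a loopless graph (sigma = 0) this is sum |lambda_i|. *)
Definition energy_of (R : realType) (s : seq R) (sigma N : nat) : R :=
  \sum_(x <- s) `|x - sigma%:R / N%:R|.

(* Disjoint union p G \cup q G^l: vertices (k, v), copy k < p is G,
   copy k >= p is G^l (every vertex looped). *)
Definition union_rel (V : finType) (m : nat) (e : rel V) : rel ('I_m * V)%type :=
  fun x y => (x.1 == y.1) && e x.2 y.2.

Definition union_loops (V : finType) (p m : nat) : {set ('I_m * V)%type} :=
  [set x | p <= nat_of_ord x.1]%N.

(** Both [G] and [G^l] have spectra determined by that of [G]: the adjacency
   matrix of [G^l] is [A(G) + I], so its eigenvalues are the [lambda_i + 1], and
   the adjacency matrix of the union is block diagonal, so its spectrum is [p]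
   copies of the [lambda_i] and [q] copies of the [lambda_i + 1]. The union has
   [qn] loops on [mn] vertices, so its energy is
   [sum_i p |lambda_i - q/m| + q |lambda_i + p/m|]. When
   [|lambda_i| >= max(p/m, q/m)] both absolute values keep the sign of
   [lambda_i], and each summand collapses to [m |lambda_i|]. *)

From HB Require Import structures.
From mathcomp Require Import all_boot all_order all_algebra.
From mathcomp Require Import reals.
From mathcomp Require Import fingroup perm.
From mathcomp Require Import ring lra.

Set Implicit Arguments. Unset Strict Implicit. Unset Printing Implicit Defensive.
Import Order.TTheory GRing.Theory Num.Theory.
Local Open Scope ring_scope.

Lemma det_reindex (S : comNzRingType) (T : finType) (F : T -> T -> S) k k'
  (f : 'I_k -> T) (g : 'I_k' -> T) :
  bijective f -> bijective g ->
  \det (\matrix_(i, j) F (f i) (f j)) = \det (\matrix_(i, j) F (g i) (g j)).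
Proof.
move=> fb gb.
have ekk : k = k'.
  by have := bij_eq_card fb; have := bij_eq_card gb; rewrite !card_ord => -> .
subst k'.
case: (gb) => g' gK g'K.
have hinj : injective (g' \o f).
  apply: inj_comp; [exact: can_inj g'K | exact: bij_inj fb].
pose s := perm hinj.
have -> : \matrix_(i,j) F (f i) (f j)
   = row_perm s (col_perm s (\matrix_(i,j) F (g i) (g j))).
  by apply/matrixP => i j; rewrite /row_perm /col_perm !mxE !permE /= !g'K.
rewrite row_permE col_permE !det_mulmx !det_perm odd_permV.
by rewrite mulrC -mulrA -expr2 sqrr_sign mulr1.
Qed.

Lemma det_block_diag (S : comNzRingType) (V : finType) m
  (F : 'I_m * V -> 'I_m * V -> S) :
  (forall x y, x.1 != y.1 -> F x y = 0) ->
  \det (\matrix_(i, j) F (enum_val i) (enum_val j) : 'M_#|{: 'I_m * V}|) =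
  \prod_(k < m) \det (\matrix_(i, j) F (k, enum_val i) (k, enum_val j) : 'M_#|V|).
Proof.
elim: m F => [|m IH] F Fbd.
  rewrite big_ord0.
  have E : #|{: 'I_0 * V}| = 0%N by rewrite card_prod card_ord.
  pose f := fun i : 'I_0 => (enum_val (cast_ord (esym E) i) : 'I_0 * V).
  have fb : bijective f.
    apply: inj_card_bij; last by rewrite E.
    by move=> i j /enum_val_inj /cast_ord_inj.
  by rewrite (det_reindex F (enum_val_bij _) fb) det_mx00.
(* Listing copy [ord0] first turns the matrix into [block_mx A 0 0 B]. *)
pose gu (u : 'I_#|V| + 'I_#|{: 'I_m * V}|) : 'I_m.+1 * V :=
  match u with
  | inl a => (ord0, enum_val a)
  | inr b => (lift ord0 (enum_val b).1, (enum_val b).2) end.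
pose g i := gu (split i).
have gb : bijective g.
  apply: inj_card_bij.
    apply: inj_comp; last exact: (can_inj (@splitK _ _)).
    case=> a [] b //.
      by case=> /enum_val_inj ->.
    move=> /eqP; rewrite xpair_eqE (inj_eq lift_inj) => /andP[/eqP e1 /eqP e2].
    congr inr; apply: enum_val_inj.
    by rewrite [enum_val a]surjective_pairing [enum_val b]surjective_pairing e1 e2.
  by rewrite card_ord !card_prod !card_ord mulSn.
rewrite (det_reindex F (enum_val_bij _) gb).
pose A := (\matrix_(i,j) F (ord0, enum_val i) (ord0, enum_val j) : 'M_#|V|).
pose F' (x y : 'I_m * V) := F (lift ord0 x.1, x.2) (lift ord0 y.1, y.2).
pose B := (\matrix_(i,j) F' (enum_val i) (enum_val j) : 'M_#|{: 'I_m * V}|).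
have -> : \matrix_(i,j) F (g i) (g j) = block_mx A 0 0 B.
  apply/matrixP => i j; rewrite -[i]splitK -[j]splitK.
  case: (split i) => a; case: (split j) => b; rewrite [LHS]mxE /g !unsplitK /=.
  - by rewrite block_mxEul !mxE.
  - by rewrite block_mxEur mxE; apply: Fbd; exact: neq_lift.
  - by rewrite block_mxEdl mxE; apply: Fbd; rewrite eq_sym; exact: neq_lift.
  - by rewrite block_mxEdr !mxE /F'; case: (enum_val a); case: (enum_val b).
rewrite det_ublock IH; last first.
  by move=> x y /= nxy; apply: Fbd => /=; rewrite (inj_eq lift_inj).
by rewrite big_ord_recl.
Qed.

Lemma comp_XsubC_XsubC (R : comNzRingType) (a b : R) :
  ('X - a%:P) \Po ('X - b%:P) = 'X - (a + b)%:P.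
Proof. by rewrite comp_polyB comp_polyX comp_polyC polyCD opprD addrA addrAC. Qed.

Lemma char_poly_mx_adjmx (R : realType) (V : finType) (e : rel V)
    (L : {set V}) :
  char_poly_mx (adjmx R e L) =
  \matrix_(i, j) ('X *+ (enum_val i == enum_val j)
                  - ((e (enum_val i) (enum_val j))%:R
                     + ((enum_val i == enum_val j) && (enum_val i \in L))%:R)%:P).
Proof.
by apply/matrixP => i j; rewrite !mxE (inj_eq enum_val_inj).
Qed.

Lemma sum_flatten_nseq (T : Type) (U : nmodType) (n : nat) (s : seq T)
    (F : T -> U) :
  \sum_(x <- flatten (nseq n s)) F x = (\sum_(x <- s) F x) *+ n.
Proof. by elim: n => [|n IH]; rewrite ?big_nil // big_cat IH mulrS. Qed.

Lemma prod_flatten_nseq (T : Type) (S : comNzRingType) (n : nat) (s : seq T)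
  (F : T -> S) :
  \prod_(x <- flatten (nseq n s)) F x = (\prod_(x <- s) F x) ^+ n.
Proof. by elim: n => [|n IH]; rewrite ?big_nil // big_cat IH exprS. Qed.

Lemma size_spectrum (R : realType) (N : nat) (M : 'M[R]_N) (s : seq R) :
  is_spectrum M s -> size s = N.
Proof.
rewrite /is_spectrum => /(congr1 (fun r : {poly R} => size r)).
by rewrite size_char_poly size_prod_XsubC => -[].
Qed.

Lemma is_spectrum_perm (R : realType) (N : nat) (M : 'M[R]_N) (s t : seq R) :
  is_spectrum M s -> is_spectrum M t -> perm_eq s t.
Proof. by move=> Ms Mt; apply: prod_XsubC_eq; rewrite -Ms -Mt. Qed.

Section GraphSpectra.

Variables (R : realType) (V : finType) (e : rel V).

Lemma char_poly_adjmx_setT :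
  char_poly (adjmx R e setT) = char_poly (adjmx R e set0) \Po ('X - 1).
Proof.
rewrite /char_poly -det_map_mx !char_poly_mx_adjmx.
congr (\det _); apply/matrixP => i j; rewrite !mxE in_setT in_set0 andbF andbT /=.
case: eqP => _; rewrite ?mulr1n ?mulr0n addr0.
  by rewrite -polyC1 comp_XsubC_XsubC.
by rewrite comp_polyB comp_poly0 comp_polyC.
Qed.

Lemma char_poly_union_loops (p q : nat) :
  char_poly (adjmx R (@union_rel V (p + q) e) (union_loops V p (p + q))) =
  char_poly (adjmx R e set0) ^+ p * char_poly (adjmx R e setT) ^+ q.
Proof.
pose L := union_loops V p (p + q).
pose F x y : {poly R} :=
  'X *+ (x == y)
  - ((@union_rel V (p + q) e x y)%:R + ((x == y) && (x \in L))%:R)%:P.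
rewrite /char_poly.
have -> : char_poly_mx (adjmx R (@union_rel V (p + q) e) L) =
          \matrix_(i, j) F (enum_val i) (enum_val j) by rewrite char_poly_mx_adjmx.
rewrite det_block_diag; last first.
  move=> x y xy; rewrite /F /union_rel (negbTE xy) /=.
  have -> : (x == y) = false by apply: contraNF xy => /eqP ->.
  by rewrite mulr0n addr0 polyC0 subr0.
have block (k : 'I_(p + q)) : \matrix_(i, j) F (k, enum_val i) (k, enum_val j) =
    char_poly_mx (adjmx R e (if (k < p)%N then set0 else setT)).
  rewrite char_poly_mx_adjmx; apply/matrixP => i j.
  rewrite !mxE /F /union_rel /L xpair_eqE eqxx inE /= leqNgt.
  by case: ifP; rewrite ?in_set0 ?in_setT.
rewrite big_split_ord /=.
under eq_bigr => k _ do rewrite block /= ltn_ord.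
under [X in _ * X]eq_bigr => k _ do rewrite block /= ltnNge leq_addr.
by rewrite !prodr_const !card_ord.
Qed.

Lemma is_spectrum_loops (s : seq R) :
  is_spectrum (adjmx R e set0) s ->
  is_spectrum (adjmx R e setT) [seq x + 1 | x <- s].
Proof.
rewrite /is_spectrum char_poly_adjmx_setT => ->.
rewrite rmorph_prod big_map; apply: eq_bigr => x _ /=.
by rewrite -polyC1 comp_XsubC_XsubC.
Qed.

Lemma is_spectrum_union (p q : nat) (s : seq R) :
  is_spectrum (adjmx R e set0) s ->
  is_spectrum (adjmx R (@union_rel V (p + q) e) (union_loops V p (p + q)))
    (flatten (nseq p s) ++ flatten (nseq q [seq x + 1 | x <- s])).
Proof.
move=> spec_s; have spec_loops := is_spectrum_loops spec_s.
rewrite /is_spectrum char_poly_union_loops big_cat !prod_flatten_nseq.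
by rewrite -spec_s -spec_loops.
Qed.

End GraphSpectra.

Lemma abs_shift_mix (R : realDomainType) (a b x : R) :
  0 <= a -> 0 <= b -> a <= `|x| -> b <= `|x| ->
  a * `|x - b| + b * `|x + a| = (a + b) * `|x|.
Proof.
move=> a_ge0 b_ge0; have [x_ge0|x_lt0] := lerP 0 x.
  rewrite ger0_norm // => ax bx.
  by rewrite !ger0_norm ?subr_ge0 ?addr_ge0 //; ring.
rewrite ltr0_norm // => ax bx.
by rewrite !ler0_norm; [ring | lra | lra].
Qed.

Lemma abs_shift_mix_nat (R : realFieldType) (p q : nat) (x : R) :
  (0 < p + q)%N ->
  Num.max (p%:R / (p + q)%:R) (q%:R / (p + q)%:R) <= `|x| ->
  p%:R * `|x - q%:R / (p + q)%:R| + q%:R * `|x + 1 - q%:R / (p + q)%:R|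
  = (p + q)%:R * `|x|.
Proof.
rewrite -(ltr0n R) ge_max => m_gt0 /andP[ax bx].
set m := (p + q)%:R in m_gt0 ax bx *.
set a := p%:R / m in ax; set b := q%:R / m in bx *.
have m_neq0 : m != 0 by rewrite gt_eqF.
have ab1 : a + b = 1 by rewrite -mulrDl -natrD divff.
have -> : x + 1 - b = x + a by rewrite -ab1 addrA addrK.
have a_ge0 : 0 <= a by rewrite divr_ge0 // ltW.
have b_ge0 : 0 <= b by rewrite divr_ge0 // ltW.
have -> : p%:R = m * a by rewrite mulrC divfK.
have -> : q%:R = m * b by rewrite mulrC divfK.
clearbody a b.
by rewrite -!mulrA -mulrDr abs_shift_mix // ab1 mul1r.
Qed.

Lemma card_union_loops (V : finType) (p q : nat) :
  #|union_loops V p (p + q)| = (q * #|V|)%N.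
Proof.
have -> : union_loops V p (p + q) = setX [set k : 'I_(p + q) | (p <= k)%N] setT.
  by apply/setP => x; rewrite !inE andbT.
rewrite cardsX cardsT; congr (_ * _)%N.
rewrite -sum1_card big_mkcond big_split_ord /=.
rewrite big1 ?add0n; last by move=> i _; rewrite inE /= leqNgt ltn_ord.
rewrite (eq_bigr (fun _ => 1%N)); last by move=> i _; rewrite inE /= leq_addr.
by rewrite sum1_card card_ord.
Qed.

Lemma union_loop_density (R : realFieldType) (V : finType) (p q : nat) :
  (0 < #|V|)%N ->
  #|union_loops V p (p + q)|%:R / #|{: 'I_(p + q) * V}|%:R
  = q%:R / (p + q)%:R :> R.
Proof.
move=> V_gt0; rewrite card_union_loops card_prod card_ord !natrM -mulf_div.
by rewrite divff ?mulr1 // pnatr_eq0 -lt0n.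
Qed.

Theorem theorem2 (R : realType) (V : finType) (e : rel V) (p q : nat) :
  simple_graph e ->
  (0 < p + q)%N ->
  forall sG : seq R, is_spectrum (adjmx R e set0) sG ->
  (forall x, x \in sG ->
     Num.max (p%:R / (p + q)%:R) (q%:R / (p + q)%:R) <= `|x|) ->
  forall sU : seq R,
    is_spectrum (adjmx R (@union_rel V (p + q) e) (union_loops V p (p + q))) sU ->
    energy_of sU #|union_loops V p (p + q)| #|{: 'I_(p + q) * V}|
    = (p + q)%:R * energy_of sG 0 #|V|.
Proof.
move=> _ m_gt0 sG spec_G eig_ge sU spec_U.
have spec_U' := is_spectrum_perm spec_U (is_spectrum_union p q spec_G).
rewrite /energy_of (perm_big _ spec_U') big_cat /= !sum_flatten_nseq big_map.
rewrite -[_ *+ p]mulr_natl -[_ *+ q]mulr_natl !mulr_sumr -big_split /=.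
apply: eq_big_seq => x xG.
have V_gt0 : (0 < #|V|)%N by rewrite -(size_spectrum spec_G); case: (sG) xG.
by rewrite union_loop_density // mul0r subr0 abs_shift_mix_nat // eig_ge.
Qed.
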